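(* Let $T=(V,E)$ be a tree with $\mathrm{pthin}(T)=2$, and let $\sigma$ be an ordering of $V$ and $S=\{V^0,V^1\}$ a partition of $V$ that are strongly consistent. Let $v_1,v_2,v_3$ be vertices with $v_1<v_2<v_3$ and $\deg(v_2)\ge 4$. Then there is no vertex $w\notin\{v_1,v_3\}$ adjacent to $v_2$ such that both the unique simple path from $v_2$ to $v_1$ and the unique simple path from $v_2$ to $v_3$ pass through $w$.
   Context: For a graph $G=(V,E)$, a linear ordering $<$ of $V$ and a partition of $V$ into classes are called strongly consistent if for every triple $r<s<t$ of vertices with $rt\in E$: if $r$ and $s$ belong to the same class then $st\in E$, and if $s$ and $t$ belong to the same class then $rs\in E$. The proper thinness $\mathrm{pthin}(G)$ is the minimum $k$ such that some ordering and some partition into $k$ classes are strongly consistent. *)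

From mathcomp Require Import all_boot.
Set Implicit Arguments. Unset Strict Implicit. Unset Printing Implicit Defensive.

Definition simple_graph (T : finType) (e : rel T) : Prop :=
  symmetric e /\ irreflexive e.

Definition simple_path (T : finType) (e : rel T) (x y : T) (p : seq T) : bool :=
  [&& path e x p, uniq (x :: p) & last x p == y].

Definition has_cycle (T : finType) (e : rel T) : Prop :=
  exists (x : T) (p : seq T),
    [&& path e x p, uniq (x :: p), 2 <= size p & e (last x p) x].

Definition is_tree (T : finType) (e : rel T) : Prop :=
  [/\ simple_graph e, #|T| > 0, (forall x y : T, connect e x y) & ~ has_cycle e].

Definition deg (T : finType) (e : rel T) (v : T) : nat := #|[set u | e v u]|.

(* Linear ordering given by an injective map sigma : T -> nat (r < s iff
   sigma r < sigma s); partition given by a class map c : T -> K. *)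
Definition strongly_consistent (T : finType) (K : eqType) (e : rel T)
    (sigma : T -> nat) (c : T -> K) : Prop :=
  forall r s t : T, sigma r < sigma s -> sigma s < sigma t -> e r t ->
    (c r = c s -> e s t) /\ (c s = c t -> e r s).

(* Some ordering and some partition into (at most) k classes are strongly consistent. *)
Definition has_pthin_partition (T : finType) (e : rel T) (k : nat) : Prop :=
  exists (sigma : T -> nat) (c : T -> 'I_k),
    injective sigma /\ strongly_consistent e sigma c.

Definition pthin_eq (T : finType) (e : rel T) (k : nat) : Prop :=
  has_pthin_partition e k /\ (forall j, j < k -> ~ has_pthin_partition e j).

(* Let w be the common neighbour.  The paths from v2 through w to v1 < v2 and to
   v3 > v2 form a branch of the tree at w; by acyclicity the other neighbours of
   v2 (there are at least three) are pairwise nonadjacent and nonadjacent to the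
   branch, and no branch vertex except w is adjacent to v2.  With two classes,
   strong consistency then forces every such neighbour u into the class of v2:
   either a branch edge ab crosses v2 (a < v2 < b), or the branch leaves w on both
   sides of v2, and in both cases u in the other class would need an edge to the
   branch.  But among three pairwise nonadjacent neighbours of v2 two lie on the
   same side of v2, and the one nearer to v2 cannot share its class. *)

From mathcomp Require Import all_boot.
Set Implicit Arguments. Unset Strict Implicit. Unset Printing Implicit Defensive.

(* [strongly_consistent e sigma c] for an arbitrary order relation [lt] in place
   of the order induced by [sigma]; every one-sided lemma below is then also
   available for the reversed order. *)
Definition strongly_consistent_ord (T : Type) (e lt : rel T) (c : T -> bool) : Prop :=
  forall r s t, lt r s -> lt s t -> e r t -> (c r = c s -> e s t) /\ (c s = c t -> e r s).

Lemma strongly_consistent_ord_flip (T : Type) (e lt : rel T) (c : T -> bool) :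
  symmetric e -> strongly_consistent_ord e lt c ->
  strongly_consistent_ord e (fun x y => lt y x) c.
Proof.
move=> sym_e SC r s t lsr lts ert; rewrite sym_e in ert.
have [cts csr] := SC _ _ _ lts lsr ert.
by split=> E; rewrite sym_e; [apply: csr | apply: cts].
Qed.

Lemma neqb_trans (x y z : bool) : x != y -> y != z -> x = z.
Proof. by case: x; case: y; case: z. Qed.

Lemma path_crossing (T : eqType) (e : rel T) (s : pred T) x p :
  path e x p -> s x -> ~~ s (last x p) ->
  exists a b, [/\ a \in x :: p, b \in x :: p, e a b, s a & ~~ s b].
Proof.
elim: p x => [|y p IHp] x /=; first by move=> _ ->.
case/andP=> exy pyp sx sl.
case sy: (s y); last by exists x, y; rewrite !inE !eqxx orbT sy.
have [a [b [ap bp eab sa sb]]] := IHp y pyp sy sl.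
by exists a, b; rewrite !(in_cons x) ap bp !orbT.
Qed.

Lemma path_prefix (T : eqType) (e : rel T) x p z :
  path e x p -> uniq (x :: p) -> z \in x :: p ->
  exists r, [/\ path e x r, uniq (x :: r), last x r = z & {subset r <= p}].
Proof.
move=> pxp uxp; rewrite in_cons => /predU1P [->|zp]; first by exists [::].
case/path.splitP: zp pxp uxp => p1 p2; rewrite -cat_cons cat_path cat_uniq.
case/andP=> pxp1 _ /andP[uxp1 _].
by exists (rcons p1 z); split=> //; [rewrite last_rcons | move=> y yp1; rewrite mem_cat yp1].
Qed.

Section OneSide.

Variables (T : eqType) (e lt : rel T) (c : T -> bool).
Hypotheses (sym_e : symmetric e) (ltT : transitive lt)
  (lt_total : forall x y, x != y -> lt x y || lt y x)
  (SC : strongly_consistent_ord e lt c).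

Lemma sc_left r s t : lt r s -> lt s t -> e r t -> ~~ e s t -> c r != c s.
Proof. by move=> lrs lst ert; apply: contraNneq => /(SC lrs lst ert).1. Qed.

Lemma sc_right r s t : lt r s -> lt s t -> e r t -> ~~ e r s -> c s != c t.
Proof. by move=> lrs lst ert; apply: contraNneq => /(SC lrs lst ert).2. Qed.

Lemma left_neighbours_class v p q :
  p != q -> e v p -> e v q -> ~~ e p q -> lt p v -> lt q v ->
  c p = c v -> c q = c v -> False.
Proof.
move=> pq evp evq npq lpv lqv cp cq.
have [epv eqv] : e p v /\ e q v by rewrite !(sym_e _ v).
case/orP: (lt_total pq) => [lpq | lqp].
- by move: (sc_right lpq lqv epv npq); rewrite cq eqxx.
by move: (sc_right lqp lpv eqv); rewrite sym_e cp eqxx => /(_ npq).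
Qed.

Lemma right_neighbour_class v a b u :
  lt a v -> lt v b -> e a b -> ~~ e v b ->
  e v u -> lt v u -> ~~ e u b -> c u = c v.
Proof.
move=> lav lvb eab nvb evu lvu nub.
have cav : c a != c v := sc_left lav lvb eab nvb.
have ub : u != b by apply: contraNneq nvb => <-.
case/orP: (lt_total ub) => [lub | lbu].
  by apply: neqb_trans cav; rewrite eq_sym (sc_left (ltT lav lvu) lub eab nub).
have nbu : ~~ e b u by rewrite sym_e.
apply: (neqb_trans (y := c b)); first by rewrite eq_sym (sc_right lvb lbu evu nvb).
by rewrite eq_sym (sc_left lvb lbu evu nbu).
Qed.

Lemma fork_left_neighbour_class v w x b u :
  lt w v -> lt v b -> e w b -> ~~ e v b -> e w x -> lt x v -> ~~ e v x ->
  e v u -> lt u v -> u != w -> ~~ e u x -> ~~ e u b -> c u = c v.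
Proof.
move=> lwv lvb ewb nvb ewx lxv nvx evu luv uw nux nub.
have cwv : c w != c v := sc_left lwv lvb ewb nvb.
case/orP: (lt_total uw) => [luw | lwu]; last first.
  by apply: neqb_trans cwv; rewrite eq_sym (sc_left lwu (ltT luv lvb) ewb nub).
have ux : u != x by apply: contraNneq nvx => <-.
have [euv exw] : e u v /\ e x w by rewrite sym_e (sym_e x).
have [nxu nxv] : ~~ e x u /\ ~~ e x v by rewrite sym_e (sym_e x).
case/orP: (lt_total ux) => [lux | lxu].
  exact: neqb_trans (sc_left lux lxv euv nxv) (sc_right lux lxv euv nux).
exact: neqb_trans (sc_right lxu luw exw nxu) cwv.
Qed.

End OneSide.

Section TwoSides.

Variables (T : eqType) (e lt : rel T) (c : T -> bool).
Hypotheses (sym_e : symmetric e) (irr_e : irreflexive e)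
  (ltNr : irreflexive lt) (ltT : transitive lt)
  (lt_total : forall x y, x != y -> lt x y || lt y x)
  (SC : strongly_consistent_ord e lt c).

Let gtT : transitive (fun x y => lt y x).
Proof. by move=> y x z lyx lzy; apply: ltT lzy lyx. Qed.

Let gt_total x y : x != y -> lt y x || lt x y.
Proof. by rewrite orbC; apply: lt_total. Qed.

Let SCgt : strongly_consistent_ord e (fun x y => lt y x) c.
Proof. exact: strongly_consistent_ord_flip. Qed.

Let neighbour_neq v u : e v u -> u != v.
Proof. by apply: contraTneq => ->; rewrite irr_e. Qed.

Let nlt_lt v u : u != v -> ~~ lt u v -> lt v u.
Proof. by case/lt_total/orP=> [->|]. Qed.

Lemma same_side_neighbours_class v p q :
  p != q -> e v p -> e v q -> ~~ e p q -> lt p v = lt q v ->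
  c p = c v -> c q = c v -> False.
Proof.
move=> pq evp evq npq same.
case lpv: (lt p v); move: same; rewrite lpv => /esym lqv.
  exact: (left_neighbours_class sym_e lt_total SC pq evp evq npq lpv lqv).
apply: (left_neighbours_class sym_e gt_total SCgt pq evp evq npq).
  by rewrite nlt_lt ?neighbour_neq ?lpv.
by rewrite nlt_lt ?neighbour_neq ?lqv.
Qed.

Lemma three_neighbours_class v u1 u2 u3 :
  u1 != u2 -> u1 != u3 -> u2 != u3 -> e v u1 -> e v u2 -> e v u3 ->
  ~~ e u1 u2 -> ~~ e u1 u3 -> ~~ e u2 u3 ->
  c u1 = c v -> c u2 = c v -> c u3 = c v -> False.
Proof.
move=> n12 n13 n23 e1 e2 e3 ne12 ne13 ne23 c1 c2 c3.
have : [|| lt u1 v == lt u2 v, lt u1 v == lt u3 v | lt u2 v == lt u3 v].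
  by case: (lt u1 v); case: (lt u2 v); case: (lt u3 v).
case/or3P=> /eqP same; first exact: same_side_neighbours_class n12 e1 e2 ne12 same c1 c2.
  exact: same_side_neighbours_class n13 e1 e3 ne13 same c1 c3.
exact: same_side_neighbours_class n23 e2 e3 ne23 same c2 c3.
Qed.

Lemma crossing_edge_neighbour_class v a b u :
  lt a v -> lt v b -> e a b -> ~~ e v a -> ~~ e v b ->
  e v u -> ~~ e u a -> ~~ e u b -> c u = c v.
Proof.
move=> lav lvb eab nva nvb evu nua nub.
have eba : e b a by rewrite sym_e.
case/orP: (lt_total (neighbour_neq evu)) => [luv | lvu].
  exact: (right_neighbour_class sym_e gtT gt_total SCgt lvb lav eba nva evu luv nua).
exact: (right_neighbour_class sym_e ltT lt_total SC lav lvb eab nvb evu lvu nub).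
Qed.

Lemma fork_neighbour_class v w x b u :
  e v w -> e w x -> e w b -> lt x v -> lt v b -> ~~ e v x -> ~~ e v b ->
  e v u -> u != w -> ~~ e u x -> ~~ e u b -> c u = c v.
Proof.
move=> evw ewx ewb lxv lvb nvx nvb evu uw nux nub.
case/orP: (lt_total (neighbour_neq evw)) => [lwv | lvw];
  case/orP: (lt_total (neighbour_neq evu)) => [luv | lvu].
- exact: (fork_left_neighbour_class sym_e ltT lt_total SC
    lwv lvb ewb nvb ewx lxv nvx evu luv uw nux nub).
- exact: (right_neighbour_class sym_e ltT lt_total SC lwv lvb ewb nvb evu lvu nub).
- exact: (right_neighbour_class sym_e gtT gt_total SCgt lvw lxv ewx nvx evu luv nux).
exact: (fork_left_neighbour_class sym_e gtT gt_total SCgt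
  lvw lxv ewx nvx ewb lvb nvb evu lvu uw nub nux).
Qed.

Lemma branch_neighbour_class (B : {pred T}) v w h1 t1 h3 t3 u :
  e v w -> e w h1 -> e w h3 -> path e h1 t1 -> path e h3 t3 ->
  {subset h1 :: t1 <= B} -> {subset h3 :: t3 <= B} ->
  lt (last h1 t1) v -> lt v (last h3 t3) ->
  v \notin B -> {in B, forall z, ~~ e v z} ->
  e v u -> u != w -> {in B, forall z, ~~ e u z} -> c u = c v.
Proof.
move=> evw ewh1 ewh3 ph1 ph3 sub1 sub3 l1v lv3 vB nvB evu uw nuB.
have lt_asym x y : lt x y -> ~~ lt y x.
  by move=> lxy; apply/negP=> /(ltT lxy); rewrite ltNr.
have neq_v z : z \in B -> z != v by move=> zB; apply: contraNneq vB => <-.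
have cross a b : a \in B -> b \in B -> e a b -> lt a v -> lt v b -> c u = c v.
  move=> aB bB eab lav lvb.
  exact: crossing_edge_neighbour_class lav lvb eab (nvB a aB) (nvB b bB) evu (nuB a aB) (nuB b bB).
(* Unless the branch starts with h1 < v < h3, one of its two paths crosses v. *)
case lvh1: (lt v h1).
  have [a [b [/sub1 aB /sub1 bB eab lva nlvb]]] := path_crossing ph1 lvh1 (lt_asym _ _ l1v).
  by apply: (cross b a) => //; rewrite 1?sym_e // nlt_lt // eq_sym neq_v.
case lh3v: (lt h3 v).
  have [a [b [/sub3 aB /sub3 bB eab lav nlbv]]] :=
    path_crossing (s := fun z => lt z v) ph3 lh3v (lt_asym _ _ lv3).
  by apply: (cross a b) => //; rewrite nlt_lt // neq_v.
have h1B : h1 \in B by apply: sub1; rewrite mem_head.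
have h3B : h3 \in B by apply: sub3; rewrite mem_head.
have lh1v : lt h1 v by rewrite nlt_lt ?lvh1 // eq_sym neq_v.
have lvh3 : lt v h3 by rewrite nlt_lt ?lh3v // neq_v.
exact: fork_neighbour_class evw ewh1 ewh3 lh1v lvh3 (nvB h1 h1B) (nvB h3 h3B)
  evu uw (nuB h1 h1B) (nuB h3 h3B).
Qed.

End TwoSides.

Section Acyclic.

Variables (T : finType) (e : rel T).
Hypotheses (sym_e : symmetric e) (irr_e : irreflexive e) (acyclic : ~ has_cycle e).

Lemma path_ends_no_common_neighbour x p u :
  path e x p -> uniq (x :: p) -> p != [::] -> u \notin x :: p ->
  e u x -> e u (last x p) -> False.
Proof.
move=> pxp uxp p_nil ux eux eul; apply: acyclic; exists u, (x :: p).
by apply/and4P; split; rewrite /= ?eux ?ux // ?ltnS ?lt0n ?size_eq0 // sym_e.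
Qed.

Lemma neighbours_nonadjacent u x y :
  x != y -> u != x -> u != y -> e u x -> e u y -> ~~ e x y.
Proof.
move=> xy ux uy eux euy; apply/negP=> exy.
apply: (@path_ends_no_common_neighbour x [:: y] u) => //=; first by rewrite exy.
  by rewrite inE xy.
by rewrite !inE negb_or ux uy.
Qed.

Section Branch.

Variables (v w : T) (q : seq T).
Hypotheses (pwq : path e w q) (uvwq : uniq [:: v, w & q]) (evw : e v w).

Let vwq : v \notin w :: q. Proof. by case/andP: uvwq. Qed.
Let uwq : uniq (w :: q). Proof. by case/andP: uvwq. Qed.

Lemma branch_notin_root : v \notin q.
Proof. by move: vwq; rewrite in_cons negb_or => /andP[]. Qed.

Lemma branch_nonadjacent_root z : z \in q -> ~~ e v z.
Proof.
move=> zq; apply/negP=> evz.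
have [r [pwr uwr lr sub_rq]] := path_prefix pwq uwq (mem_behead (s := w :: q) zq).
apply: (path_ends_no_common_neighbour pwr uwr _ _ evw); last by rewrite lr.
  by case: r {pwr uwr sub_rq} lr => //= wz; move: uwq; rewrite wz /= zq.
by apply: contra vwq; rewrite !in_cons => /orP[-> | /sub_rq ->]; rewrite ?orbT.
Qed.

Lemma branch_nonadjacent_neighbour u z : e v u -> u != w -> z \in q -> ~~ e u z.
Proof.
move=> evu uw zq; apply/negP=> euz.
have [r [pwr uwr lr sub_rq]] := path_prefix pwq uwq (mem_behead (s := w :: q) zq).
have uq : u \notin q by apply: contraL evu => /branch_nonadjacent_root.
have sub_wr : {subset w :: r <= w :: q}.
  by move=> y; rewrite !in_cons => /orP[-> | /sub_rq ->]; rewrite ?orbT.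
apply: (@path_ends_no_common_neighbour w (rcons r u) v).
- by rewrite rcons_path pwr lr sym_e.
- by rewrite -rcons_cons rcons_uniq uwr (contra (@sub_wr u)) // in_cons negb_or uw.
- by rewrite -size_eq0 size_rcons.
- rewrite in_cons mem_rcons in_cons orbCA negb_or (contra (@sub_wr v)) ?in_cons //.
  by rewrite andbT; apply: contraTneq evu => ->; rewrite irr_e.
- exact: evw.
by rewrite last_rcons.
Qed.

End Branch.

Lemma simple_path_head v w p :
  path e v p -> uniq (v :: p) -> w \in p -> e v w -> p = w :: behead p.
Proof.
case: p => [//|h q] /andP[evh phq] uvhq wp evw.
have [<- // | hw] := eqVneq h w.
have wq : w \in q by move: wp; rewrite in_cons eq_sym (negbTE hw).
by move: evw; rewrite (negbTE (branch_nonadjacent_root phq uvhq evh wq)).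
Qed.

Lemma path_through_neighbour v w y :
  connect e v y -> e v w -> w != y -> (forall p, simple_path e v y p -> w \in p) ->
  exists h t, [/\ path e w (h :: t), uniq (v :: w :: h :: t) & last h t = y].
Proof.
case/connectP=> p0 + -> => /shortenP[p pvp uvp _] evw wy all_w.
have wp : w \in p by apply: all_w; rewrite /simple_path pvp uvp /=.
have pE := simple_path_head pvp uvp wp evw; move: pvp uvp wy; rewrite pE.
case: (behead p) => [|h t] /=; first by rewrite eqxx.
by case/andP=> _ pwt uvt _; exists h, t.
Qed.

End Acyclic.

Lemma three_other_neighbours (T : finType) (e : rel T) v w :
  4 <= deg e v -> exists u1 u2 u3,
    [/\ [/\ e v u1, e v u2 & e v u3], [/\ u1 != w, u2 != w & u3 != w]
      & [/\ u1 != u2, u1 != u3 & u2 != u3]].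
Proof.
move=> deg4; have /card_gt2P[u1 [u2 [u3 [[] ]]]] : 2 < #|[set u | e v u] :\ w|.
  by move: deg4; rewrite /deg (cardsD1 w); case: (_ \in _); rewrite ?add1n ?add0n // => /ltnW.
rewrite !inE => /andP[u1w e1] /andP[u2w e2] /andP[u3w e3] [n12 n23 n31].
by exists u1, u2, u3; split; split; rewrite // eq_sym.
Qed.

Section TreeOrder.

Variables (T : finType) (e lt : rel T) (c : T -> bool).
Hypotheses (sym_e : symmetric e) (irr_e : irreflexive e) (acyclic : ~ has_cycle e)
  (ltNr : irreflexive lt) (ltT : transitive lt)
  (lt_total : forall x y, x != y -> lt x y || lt y x)
  (SC : strongly_consistent_ord e lt c).

Lemma other_neighbour_class v w h1 t1 h3 t3 u :
  e v w -> path e w (h1 :: t1) -> uniq [:: v, w, h1 & t1] ->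
  path e w (h3 :: t3) -> uniq [:: v, w, h3 & t3] ->
  lt (last h1 t1) v -> lt v (last h3 t3) -> e v u -> u != w -> c u = c v.
Proof.
move=> evw p1 u1 p3 u3 l1 l3 evu uw.
pose B := (h1 :: t1) ++ (h3 :: t3).
have v_B : v \notin B.
  by rewrite mem_cat negb_or (branch_notin_root u1) (branch_notin_root u3).
have nvB : {in B, forall z, ~~ e v z}.
  move=> z; rewrite mem_cat => /orP[].
    exact: (branch_nonadjacent_root sym_e acyclic p1 u1 evw).
  exact: (branch_nonadjacent_root sym_e acyclic p3 u3 evw).
have nuB : {in B, forall z, ~~ e u z}.
  move=> z; rewrite mem_cat => /orP[].
    exact: (branch_nonadjacent_neighbour sym_e irr_e acyclic p1 u1 evw evu uw).
  exact: (branch_nonadjacent_neighbour sym_e irr_e acyclic p3 u3 evw evu uw).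
case/andP: p1 => ewh1 ph1; case/andP: p3 => ewh3 ph3.
apply: (branch_neighbour_class sym_e irr_e ltNr ltT lt_total SC evw ewh1 ewh3 ph1 ph3
  _ _ l1 l3 v_B nvB evu uw nuB) => z zt; rewrite mem_cat zt ?orbT //.
Qed.

End TreeOrder.

Theorem propositionA6 (T : finType) (e : rel T) (sigma : T -> nat) (c : T -> bool)
    (v1 v2 v3 : T) :
  is_tree e -> pthin_eq e 2 ->
  injective sigma -> strongly_consistent e sigma c ->
  sigma v1 < sigma v2 -> sigma v2 < sigma v3 -> 4 <= deg e v2 ->
  ~ (exists w : T,
       [/\ w != v1, w != v3, e v2 w,
           (forall p, simple_path e v2 v1 p -> w \in p) &
           (forall p, simple_path e v2 v3 p -> w \in p)]).
Proof.
(* Only the two-class partition is used, not the minimality in [pthin_eq e 2]. *)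
move=> [[sym_e irr_e] _ conn acyc] _ inj SC l12 l23 deg4 [w [wv1 wv3 ev2w all1 all3]].
pose lt x y := sigma x < sigma y.
have ltNr : irreflexive lt by move=> x; apply: ltnn.
have ltT : transitive lt by move=> y x z; apply: ltn_trans.
have lt_total x y : x != y -> lt x y || lt y x by rewrite /lt -neq_ltn (inj_eq inj).
have [h1 [t1 [p1 u1 last1]]] := path_through_neighbour sym_e acyc (conn v2 v1) ev2w wv1 all1.
have [h3 [t3 [p3 u3 last3]]] := path_through_neighbour sym_e acyc (conn v2 v3) ev2w wv3 all3.
have same_class u : e v2 u -> u != w -> c u = c v2.
  apply: (other_neighbour_class sym_e irr_e acyc ltNr ltT lt_total SC ev2w p1 u1 p3 u3).
    by rewrite /lt last1.
  by rewrite /lt last3.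
have [x [y [z [[ex ey ez] [xw yw zw] [xy xz yz]]]]] := three_other_neighbours w deg4.
have v2_neq u : e v2 u -> v2 != u by apply: contraTneq => <-; rewrite irr_e.
have nonadj u u' : e v2 u -> e v2 u' -> u != u' -> ~~ e u u'.
  move=> evu evu' uu'.
  exact: (neighbours_nonadjacent sym_e acyc uu' (v2_neq _ evu) (v2_neq _ evu')).
exact: (three_neighbours_class sym_e irr_e lt_total SC xy xz yz ex ey ez
  (nonadj _ _ ex ey xy) (nonadj _ _ ex ez xz) (nonadj _ _ ey ez yz)
  (same_class _ ex xw) (same_class _ ey yw) (same_class _ ez zw)).
Qed.
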